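(* Let $n$ be a positive integer, $g=3n+1$, and let $G=\{\ell_1<\dots<\ell_g\}$ be a pure $(2n)$-sparse gapset of genus $g$ with multiplicity $m$ and depth $q\le 3$. Let $\alpha=\max\{i:\ell_{i+1}-\ell_i=2n\}$. Then $\ell_\alpha\le 2m-1$.
   Context: A gapset is a finite set $G\subset\mathbb{N}=\{1,2,\dots\}$ such that whenever $z\in G$ and $z=x+y$ with $x,y\in\mathbb{N}$, then $x\in G$ or $y\in G$; its genus is $g=\#G$. Multiplicity $m(G)=\min\{s\in\mathbb{N}:s\notin G\}$; conductor $c(G)=\min\{s\in\mathbb{N}: s+t\notin G\ \forall t\in\mathbb{N}_0\}$; depth $q(G)=\lceil c(G)/m(G)\rceil$. $G$ is pure $\kappa$-sparse if $\ell_{i+1}-\ell_i\le\kappa$ for all $i$ with equality for some $i$. *)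

From mathcomp Require Import all_boot.
Set Implicit Arguments. Unset Strict Implicit. Unset Printing Implicit Defensive.

(* A finite set G of positive integers is represented by the strictly
   increasing list of its elements [:: l_1; ...; l_g]. *)
Definition gapset (G : seq nat) : Prop :=
  sorted ltn G /\ (forall z, z \in G -> 0 < z) /\
  (forall z x y, z \in G -> 0 < x -> 0 < y -> z = x + y -> (x \in G) \/ (y \in G)).

Definition genus (G : seq nat) : nat := size G.

(* 1-based indexing: ell G i = l_i *)
Definition ell (G : seq nat) (i : nat) : nat := nth 0 G i.-1.

Definition is_least (P : nat -> Prop) (n : nat) : Prop :=
  P n /\ forall k, P k -> n <= k.

Definition is_greatest (P : nat -> Prop) (n : nat) : Prop :=
  P n /\ forall k, P k -> k <= n.

Definition is_multiplicity (G : seq nat) (m : nat) : Prop :=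
  is_least (fun s => 0 < s /\ s \notin G) m.

Definition is_conductor (G : seq nat) (c : nat) : Prop :=
  is_least (fun s => 0 < s /\ forall t, s + t \notin G) c.

Definition ceil_div (c m : nat) : nat := (c + m.-1) %/ m.

Definition is_depth (G : seq nat) (q : nat) : Prop :=
  exists m c, is_multiplicity G m /\ is_conductor G c /\ q = ceil_div c m.

Definition pure_sparse (kappa : nat) (G : seq nat) : Prop :=
  (forall i, 1 <= i < size G -> ell G i.+1 - ell G i <= kappa) /\
  (exists i, 1 <= i < size G /\ ell G i.+1 - ell G i = kappa).

From mathcomp Require Import all_boot.
From mathcomp Require Import zify.

Set Implicit Arguments.
Unset Strict Implicit.
Unset Printing Implicit Defensive.

(* Let y = l_(alpha+1) = l_alpha + 2n.  For each 0 < a <= y/2 one of a, y - a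
   is a gap, and these choices together with y give y/2 + 1 distinct gaps, so
   y/2 < g = 3n + 1.  On the other hand y is below the conductor c <= q m <= 3m.
   The two bounds y <= 6n + 1 and y <= 3m - 1 combine to l_alpha = y - 2n <= 2m - 1. *)

Lemma gapset_half_lt_size (G : seq nat) y : gapset G -> y \in G -> y./2 < size G.
Proof.
case=> _ [G_pos G_split] yG.
have y_pos := G_pos y yG.
have half_le : y./2 + y./2 <= y by rewrite addnn; have := odd_double_half y; lia.
pose pick a := if a \in G then a else y - a.
have pickG a : 0 < a <= y./2 -> pick a \in G.
  move=> /andP[a_pos a_le]; rewrite /pick; case: ifP => // aNG.
  have y_a_pos : 0 < y - a by lia.
  have a_le_y : a <= y by lia.
  have [aG|//] := G_split y a (y - a) yG a_pos y_a_pos (esym (subnKC a_le_y)).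
  by rewrite aG in aNG.
have pick_lt a : 0 < a <= y./2 -> pick a < y.
  by move=> /andP[? ?]; rewrite /pick; case: ifP => _; lia.
have pick_inj : {in iota 1 y./2 &, injective pick}.
  move=> a b; rewrite !mem_iota /pick => /andP[? ?] /andP[? ?].
  by case: ifP => _; case: ifP => _; lia.
have : size (rcons (map pick (iota 1 y./2)) y) <= size G.
  apply: uniq_leq_size.
  - rewrite rcons_uniq (map_inj_in_uniq pick_inj) iota_uniq andbT.
    apply/mapP => -[a]; rewrite mem_iota => /andP[a_pos a_lt] y_eq.
    by have := pick_lt a; rewrite a_pos /=; lia.
  - move=> z; rewrite mem_rcons in_cons => /orP[/eqP -> //|/mapP[a]].
    by rewrite mem_iota => /andP[? ?] ->; apply: pickG; lia.
by rewrite size_rcons size_map size_iota.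
Qed.

Lemma gapset_lt_conductor (G : seq nat) c y :
  is_conductor G c -> y \in G -> y < c.
Proof.
move=> [[_ c_free] _] yG; rewrite ltnNge; apply/negP => c_le.
by have := c_free (y - c); rewrite subnKC // yG.
Qed.

Lemma multiplicity_unique (G : seq nat) m m' :
  is_multiplicity G m -> is_multiplicity G m' -> m = m'.
Proof.
by move=> [m_mul m_min] [m'_mul m'_min]; apply/eqP; rewrite eqn_leq m_min ?m'_min.
Qed.

Lemma conductor_unique (G : seq nat) c c' :
  is_conductor G c -> is_conductor G c' -> c = c'.
Proof.
by move=> [c_cond c_min] [c'_cond c'_min]; apply/eqP; rewrite eqn_leq c_min ?c'_min.
Qed.

Lemma multiplicity_gt0 (G : seq nat) m : is_multiplicity G m -> 0 < m.
Proof. by case=> [[]]. Qed.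

Lemma leq_mul_ceil_div c m : 0 < m -> c <= ceil_div c m * m.
Proof. by rewrite /ceil_div; lia. Qed.

Lemma conductor_le_depth_mul (G : seq nat) m c q :
  is_multiplicity G m -> is_depth G q -> is_conductor G c -> c <= q * m.
Proof.
move=> Gm [m' [c' [Gm' [Gc' ->]]]] Gc.
rewrite (multiplicity_unique Gm Gm') (conductor_unique Gc Gc').
exact/leq_mul_ceil_div/(multiplicity_gt0 Gm').
Qed.

Theorem mainTheorem16 (n : nat) (G : seq nat) (m q alpha : nat) :
  0 < n ->
  gapset G ->
  genus G = 3 * n + 1 ->
  pure_sparse (2 * n) G ->
  is_multiplicity G m ->
  is_depth G q ->
  q <= 3 ->
  is_greatest (fun i => 1 <= i < size G /\ ell G i.+1 - ell G i = 2 * n) alpha ->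
  ell G alpha <= 2 * m - 1.
Proof.
move=> _ gapG genusG _ Gm Gq q_le3 [[/andP[alpha_pos alpha_lt] jump] _].
have [c Gc] : exists c, is_conductor G c.
  by case: Gq => [m' [c [_ [Gc _]]]]; exists c.
set y := ell G alpha.+1.
have yG : y \in G by apply: mem_nth.
have y_lt_c := gapset_lt_conductor Gc yG.
have c_le := conductor_le_depth_mul Gm Gq Gc.
have half_y := gapset_half_lt_size gapG yG.
have := leq_mul q_le3 (leqnn m).
have := odd_double_half y; rewrite /genus in genusG; lia.
Qed.
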